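(* In the setting below, the vector $v=1\otimes e^0\in V^{\Lambda_0}$ is a highest weight vector for $Vir\otimes\tilde{\mathfrak a}$ of type $Vir(\tfrac45,0)\otimes W^{\Omega_0}$, i.e. it satisfies conditions (HW1)–(HW5) with $h=0$ and $\omega_j=0$.
   Context: Setting. $Q$ is the $E_6$ root lattice with simple roots $\alpha_1,\dots,\alpha_6$ (Dynkin chain $\alpha_1-\alpha_3-\alpha_4-\alpha_5-\alpha_6$, $\alpha_2$ attached to $\alpha_4$), form $\langle\cdot,\cdot\rangle$ from the Cartan matrix, fundamental weights $\lambda_i$, $P=\bigoplus\mathbb Z\lambda_i$, $\mathfrak h=\mathbb C\otimes P$. $\varepsilon:P\times P\to\{\pm1\}$ is bimultiplicative with $[\varepsilon(\lambda_i,\lambda_j)]$ rows $(1,1,1,1,1,1)$, $(-1,1,1,1,1,-1)$, $(-1,1,1,1,1,1)$, $(1,-1,1,1,1,1)$, $(1,1,1,1,1,-1)$, $(1,1,1,1,1,1)$. $V_P=S(\hat{\mathfrak h}^-)\otimes\mathbb C[P]$ with Heisenberg operators $h(n)$ ($[h(m),h'(n)]=m\langle h,h'\rangle\delta_{m+n,0}$, $h(n)1=0$ for $n>0$, $h(0)(u\otimes e^\beta)=\langle h,\beta\rangle u\otimes e^\beta$). For $\alpha\in Q$: $Y(1\otimes e^\alpha,z)=\exp(\sum_{k\ge1}\frac{\alpha(-k)}kz^k)\exp(-\sum_{k\ge1}\frac{\alpha(k)}kz^{-k})e_\alpha z^{\alpha(0)}=\sum_{n}\{1\otimes e^\alpha\}_nz^{-n-1}$,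 $e_\alpha(u\otimes e^\beta)=\varepsilon(\alpha,\beta)u\otimes e^{\alpha+\beta}$, $z^{\alpha(0)}(u\otimes e^\beta)=z^{\langle\alpha,\beta\rangle}u\otimes e^\beta$; $Y(h(-1)1\otimes e^0,z)=\sum_nh(n)z^{-n-1}$, and more generally $Y(h_1(-1)\cdots h_k(-1)\otimes e^\alpha,z)=\,:h_1(z)\cdots h_k(z)Y(1\otimes e^\alpha,z):$ (normal ordering: annihilation operators $h(n)$, $n>0$, to the right). $V^{\Lambda_0}=S(\hat{\mathfrak h}^-)\otimes\mathbb C[Q]$, $V^{\Lambda_1}$ and $V^{\Lambda_6}$ are the subspaces spanned by $S(\hat{\mathfrak h}^-)\otimes e^\nu$ with $\nu\in\lambda_1+Q$, resp. $\nu\in\lambda_6+Q$; these are the level one irreducible modules of the affine algebra of type $E_6^{(1)}$. $\tau$: $\alpha_1\leftrightarrow\alpha_6$, $\alpha_3\leftrightarrow\alpha_5$ ($\lambda_1\leftrightarrow\lambda_6$, $\lambda_3\leftrightarrow\lambda_5$); $\mathrm{Proj}(\nu)=(\nu+\tau\nu)/2$. $\theta=\alpha_1+2\alpha_2+2\alpha_3+3\alpha_4+2\alpha_5+\alpha_6$. The $F_4^{(1)}$ subalgebra $\tilde{\mathfrak a}$ has Chevalley-type raising operators $\{\beta_1\}_0=\{1\otimes e^{\alpha_2}\}_0$, $\{\beta_2\}_0=\{1\otimes e^{\alpha_4}\}_0$, $\{\beta_3\}_0=\{1\otimes e^{\alpha_3}\}_0+\{1\otimes e^{\alpha_5}\}_0$,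 $\{\beta_4\}_0=\{1\otimes e^{\alpha_1}\}_0+\{1\otimes e^{\alpha_6}\}_0$, and $\{1\otimes e^{-\theta}\}_1$. The coset conformal vector is $\omega=\frac1{10}[(-\lambda_1+\lambda_6)(-1)^2+(\lambda_3-\lambda_5)(-1)^2+(\lambda_1-\lambda_3+\lambda_5-\lambda_6)(-1)^2]\otimes e^0+\frac15(-1\otimes e^{\pm\gamma_1}-1\otimes e^{\pm\gamma_2}+1\otimes e^{\pm\gamma_3})$, where $\gamma_1=\alpha_1-\alpha_6$, $\gamma_2=\alpha_3-\alpha_5$, $\gamma_3=\gamma_1+\gamma_2$ and $1\otimes e^{\pm\gamma}$ means $1\otimes e^{\gamma}+1\otimes e^{-\gamma}$; $L(n)=\{\omega\}_{n+1}$ gives a Virasoro representation of central charge $4/5$ commuting with $\tilde{\mathfrak a}$. The $F_4$ fundamental weights are $\omega_1=\lambda_2,\omega_2=\lambda_4,\omega_3=\frac{\lambda_3+\lambda_5}2,\omega_4=\frac{\lambda_1+\lambda_6}2$; $\Omega_0,\Omega_4$ are the level one $F_4^{(1)}$ weights with finite parts $0,\omega_4$, and $W^{\Omega_j}$ the corresponding irreducible modules; $Vir(c,h)$ is the irreducible highest weight Virasoro module. A nonzero $v\in V_P$ is a highest weight vector of type $Vir(\frac45,h)\otimes W^{\Omega_j}$ if: (HW1) $\{1\otimes e^{-\theta}\}_1v=0$; (HW2) $\{\beta_i\}_0v=0$ for $i=1,\dots,4$; (HW3) $L(1)v=L(2)v=0$; (HW4) $L(0)v=hv$; (HW5) $v\in\bigoplus_kS(\hat{\mathfrak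 h}^-)\otimes e^{\nu_k}$ with $\mathrm{Proj}(\nu_k)=\omega_j$ for all $k$ (where $\omega_0:=0$). *)

From HB Require Import structures.
From mathcomp Require Import all_boot all_order all_algebra.
From mathcomp Require Import finmap multiset.
From mathcomp.multinomials Require Import monalg.

Set Implicit Arguments.
Unset Strict Implicit.
Unset Printing Implicit Defensive.

Import GRing.Theory Num.Theory.
Local Open Scope ring_scope.

(* E_6 data.  Index i : 'I_6 stands for alpha_{i+1} / lambda_{i+1}.     *)
(* Dynkin chain a1-a3-a4-a5-a6, a2 attached to a4.                     *)
Definition e6_edges : seq (nat * nat) := [:: (0,2); (2,3); (3,4); (4,5); (1,3)]%N.

Definition cartanZ (i j : 'I_6) : int :=
  if i == j then 2
  else if ((i : nat, j : nat) \in e6_edges) || ((j : nat, i : nat) \in e6_edges)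
       then -1 else 0.

(* epsilon(lambda_i, lambda_j) = -1 exactly for these (i,j) (0-based). *)
Definition eps_neg : seq (nat * nat) := [:: (1,0); (1,5); (2,0); (3,1); (4,5)]%N.

(* Elements of P, in the basis of fundamental weights lambda_i. *)
Definition weight := {ffun 'I_6 -> int}.
(* Elements of Q, in the basis of simple roots alpha_i. *)
Definition rootv := {ffun 'I_6 -> int}.

Definition rv (l : seq int) : rootv := [ffun i : 'I_6 => nth 0 l i].
Definition simple_root (i : 'I_6) : rootv := [ffun j => (i == j)%:Z].
Definition negr (a : rootv) : rootv := [ffun i => - a i].

(* the element of Q as an element of P (lambda coordinates):
   <alpha, alpha_i> = sum_j a_j A_{ji} *)
Definition toP (a : rootv) : weight := [ffun i => \sum_(j < 6) cartanZ j i * a j].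
Definition addw (b b' : weight) : weight := [ffun i => b i + b' i].
(* <alpha, beta> for alpha in Q (alpha coords), beta in P (lambda coords) *)
Definition pairQP (a : rootv) (b : weight) : int := \sum_(i < 6) a i * b i.

Definition eps (C : nzRingType) (b b' : weight) : C :=
  \prod_(i < 6) \prod_(j < 6)
     (if ((i : nat, j : nat) \in eps_neg) && odd (absz (b i * b' j)) then -1 else 1).

(* The Fock space V_P = S(h^-) (x) C[P].
   S(h^-) is the polynomial algebra in the variables alpha_i(-k), k >= 1;
   the variable alpha_{i+1}(-(k+1)) is encoded by (i, k) : 'I_6 * nat, and a
   monomial is a finite multiset of variables.  V_P is the free C-module on
   pairs (monomial, weight), i.e. u (x) e^beta.                           *)
Definition hvar := ('I_6 * nat)%type.
Definition mono := multiset hvar.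
Definition basisT := (mono * weight)%type.

Section Fock.
Variable C : numClosedFieldType.

Definition VP := {malg C[basisT]}.
Definition Op := VP -> VP.

Definition basis (b : basisT) : VP := << b >>.

Definition linext (F : basisT -> VP) : Op :=
  fun v => \sum_(b <- msupp v) v@_b *: F b.

Definition opscale (c : C) (f : Op) : Op := fun v => c *: f v.

Definition deg (m : mono) : nat := (\sum_(x <- finsupp m) m x * x.2.+1)%N.

(* elements of h = C (x) P, in the basis of simple roots alpha_i *)
Definition hvec := 'I_6 -> C.
Definition hv_of (a : rootv) : hvec := fun i => (a i)%:~R.

(* Heisenberg operators h(n):
   h(-k) (k>=1) : multiplication by sum_i c_i alpha_i(-k);
   h(k)  (k>=1) : k sum_{i,j} c_i <alpha_i,alpha_j> d/d alpha_j(-k);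
   h(0)         : u (x) e^beta |-> <h,beta> u (x) e^beta.                *)
Definition heis (h : hvec) (n : int) : Op :=
  linext (fun b =>
    match n with
    | Posz 0 => (\sum_(i < 6) h i * (b.2 i)%:~R) *: basis b
    | Posz k.+1 =>
        \sum_(i < 6) \sum_(j < 6)
          ((k.+1)%:R * h i * (cartanZ i j)%:~R * (b.1 (j, k))%:R)
            *: basis (msetB b.1 (msetn 1 (j, k)), b.2)
    | Negz k => \sum_(i < 6) h i *: basis (msetD b.1 (msetn 1 (i, k)), b.2)
    end).

(* coefficient of z^j in exp(sum_{k>=1} a_k z^k) for commuting operators a_k:
   sum_r 1/r! sum_{k_1+..+k_r = j, k_i >= 1} a_{k_1} ... a_{k_r} *)
Definition expco (a : nat -> Op) (j : nat) : Op := fun v =>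
  \sum_(r < j.+1) (r`!%:R)^-1 *:
     \sum_(t : r.-tuple 'I_j.+1 |
             ((\sum_(i <- t) (i : nat))%N == j) && all (fun i : 'I_j.+1 => 0 < i)%N t)
        foldr (fun (i : 'I_j.+1) (f : Op) => a (i : nat) \o f) id t v.

(* coefficient of z^j in exp(sum_{k>=1} alpha(-k)/k z^k) *)
Definition Screate (a : rootv) : nat -> Op :=
  expco (fun k => opscale (k%:R)^-1 (heis (hv_of a) (Negz k.-1))).
(* coefficient of z^{-j} in exp(- sum_{k>=1} alpha(k)/k z^{-k}) *)
Definition Tannih (a : rootv) : nat -> Op :=
  expco (fun k => opscale (- (k%:R)^-1) (heis (hv_of a) (Posz k))).

(* {1 (x) e^alpha}_n, the coefficient of z^{-n-1} in Y(1 (x) e^alpha, z)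
   = E^-(z) E^+(z) e_alpha z^{alpha(0)}.  On u (x) e^beta the annihilation
   part E^+ contributes only z^{-j} with j <= deg u (higher coefficients
   vanish), so the sum over j is finite. *)
Definition mode_e (a : rootv) (n : int) : Op :=
  linext (fun b =>
    let s := pairQP a b.2 in
    let b' := (b.1, addw (toP a) b.2) in
    eps C (toP a) b.2 *:
      \sum_(j < (deg b.1).+1)
        match (j%:Z - s - n - 1)%R with
        | Posz i => Screate a i (Tannih a j (basis b'))
        | Negz _ => 0
        end).

(* normally ordered product :h(p) h'(q): (annihilators h(k), k>0, to the right) *)
Definition nord (h h' : hvec) (p q : int) : Op :=
  if (0 < p)%R then heis h' q \o heis h p else heis h p \o heis h' q.

(* {h(-1)h'(-1) (x) e^0}_n = coefficient of z^{-n-1} in :h(z)h'(z):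
   = sum_{p+q = n-1} :h(p)h'(q):.  On a basis vector u (x) e^beta only the
   terms with |p| <= deg u + |n| + 1 can be nonzero. *)
Definition mode_hh (h h' : hvec) (n : int) : Op :=
  linext (fun b =>
    let N := (deg b.1 + `|n| + 1)%N in
    \sum_(k < (N + N).+1)
       nord h h' (k%:Z - N%:Z) (n - 1 - (k%:Z - N%:Z)) (basis b)).

(* fundamental weights lambda_i as elements of h (alpha coordinates) *)
Definition cartanC : 'M[C]_6 := \matrix_(i, j) (cartanZ i j)%:~R.
Definition lam (i : 'I_6) : hvec := fun j => invmx cartanC j i.

Definition hA : hvec := fun j => - lam 0 j + lam 5 j.
Definition hB : hvec := fun j => lam 2 j - lam 4 j.
Definition hC : hvec := fun j => lam 0 j - lam 2 j + lam 4 j - lam 5 j.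

Definition gamma1 : rootv := rv [:: 1; 0; 0; 0; 0; -1].
Definition gamma2 : rootv := rv [:: 0; 0; 1; 0; -1; 0].
Definition gamma3 : rootv := rv [:: 1; 0; 1; 0; -1; -1].
Definition thetaE6 : rootv := rv [:: 1; 2; 2; 3; 2; 1].

(* mode of 1 (x) e^{+-gamma} = 1 (x) e^gamma + 1 (x) e^{-gamma} *)
Definition mode_pm (a : rootv) (n : int) : Op :=
  fun v => mode_e a n v + mode_e (negr a) n v.

(* {omega}_n for the coset conformal vector omega (Y is linear) *)
Definition omega_mode (n : int) : Op := fun v =>
  (10%:R)^-1 *: (mode_hh hA hA n v + mode_hh hB hB n v + mode_hh hC hC n v)
  + (5%:R)^-1 *: (- mode_pm gamma1 n v - mode_pm gamma2 n v + mode_pm gamma3 n v).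

Definition Lvir (n : int) : Op := omega_mode (n + 1).

Definition beta_op (i : 'I_4) : Op :=
  match val i with
  | 0%N => mode_e (simple_root 1) 0
  | 1%N => mode_e (simple_root 3) 0
  | 2%N => fun v => mode_e (simple_root 2) 0 v + mode_e (simple_root 4) 0 v
  | _ => fun v => mode_e (simple_root 0) 0 v + mode_e (simple_root 5) 0 v
  end.

Definition tau_idx (i : 'I_6) : 'I_6 :=
  match val i with
  | 0%N => 5 | 2%N => 4 | 4%N => 2 | 5%N => 0 | _ => i
  end.
Definition Proj (b : weight) : 'I_6 -> C :=
  fun i => ((b i)%:~R + (b (tau_idx i))%:~R) / 2%:R.

(* F_4 fundamental weights omega_j (j = 0..4, omega_0 := 0), lambda coords:
   omega1 = l2, omega2 = l4, omega3 = (l3+l5)/2, omega4 = (l1+l6)/2 *)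
Definition omegaF4 (j : 'I_5) : 'I_6 -> C := fun i =>
  match val j with
  | 0%N => 0
  | 1%N => ((val i == 1)%N)%:R
  | 2%N => ((val i == 3)%N)%:R
  | 3%N => ((val i == 2)%N || (val i == 4)%N)%:R / 2%:R
  | _ => ((val i == 0)%N || (val i == 5)%N)%:R / 2%:R
  end.

Definition vac : VP := basis (mset0, [ffun => 0]).

(* V^{Lambda_0}: support in S(h^-) (x) e^nu with nu in Q *)
Definition in_VLambda0 (v : VP) : Prop :=
  forall b, b \in msupp v -> exists a : rootv, b.2 = toP a.

Definition is_hw_vector (v : VP) (hw : C) (j : 'I_5) : Prop :=
  [/\ v != 0,
      mode_e (negr thetaE6) 1 v = 0,
      (forall i : 'I_4, beta_op i v = 0),
      (Lvir 1 v = 0 /\ Lvir 2 v = 0 /\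
       Lvir 0 v = hw *: v) &
      (forall b, b \in msupp v -> Proj b.2 = omegaF4 j)].

End Fock.

From HB Require Import structures.
From mathcomp Require Import all_boot all_order all_algebra.
From mathcomp Require Import finmap multiset.
From mathcomp.multinomials Require Import monalg.
From mathcomp Require Import zify.
From Stdlib Require Import FunctionalExtensionality.
Local Open Scope ring_scope.
Import GRing.Theory.

(* The vacuum 1 (x) e^0 carries no oscillators and has weight 0.  Hence every
   Heisenberg mode h(n), n >= 0, kills it, so do the normally ordered modes
   {h(-1)h'(-1) (x) e^0}_n for n > 0, and the vertex operator of e^alpha
   contributes to {1 (x) e^alpha}_n (1 (x) e^0) only z-powers z^k with k >= 0,
   so these modes vanish for n >= 0.  All of (HW1)-(HW4) are instances of
   these facts, and (HW5) holds since Proj 0 = 0. *)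

Section Vacuum.
Variable C : numClosedFieldType.

Definition weight0 : weight := [ffun => 0].

Lemma vacE : vac C = basis C (mset0, weight0).
Proof. by []. Qed.

Lemma msupp_basis (b : basisT) : msupp (basis C b) = [fset b]%fset.
Proof. by rewrite /basis msuppU oner_eq0. Qed.

Lemma basis_neq0 (b : basisT) : basis C b != 0.
Proof.
apply/eqP => /(congr1 (fun v : VP C => v@_b)).
by rewrite mcoeffU eqxx mcoeff0 => /eqP; rewrite oner_eq0.
Qed.

Lemma linext_basis (F : basisT -> VP C) (b : basisT) : linext F (basis C b) = F b.
Proof. by rewrite /linext msupp_basis big_seq_fset1 mcoeffU eqxx scale1r. Qed.

Lemma linext0 (F : basisT -> VP C) : linext F 0 = 0.
Proof. by rewrite /linext msupp0 big_seq_fset0. Qed.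

Lemma deg_mset0 : deg mset0 = 0%N.
Proof. by rewrite /deg big1_seq // => x _; rewrite mset0E. Qed.

Lemma pairQP_weight0 (a : rootv) : pairQP a weight0 = 0.
Proof. by rewrite /pairQP big1 // => i _; rewrite ffunE mulr0. Qed.

Lemma toP_weight0 : toP weight0 = weight0.
Proof. by apply/ffunP => i; rewrite !ffunE big1 // => j _; rewrite ffunE mulr0. Qed.

(* Without oscillators only j = 0 occurs in [mode_e], giving the exponent
   -<a,beta> - n - 1 of the creation part, which is negative. *)
Lemma mode_e_ground (a : rootv) (beta : weight) (n : int) :
  0 <= pairQP a beta + n -> mode_e a n (basis C (mset0, beta)) = 0.
Proof.
move=> hn; rewrite /mode_e linext_basis /= deg_mset0 big_ord1.
case E: (_ - _ - _ - _)%R => [i|i]; last by rewrite scaler0.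
by exfalso; move: E hn => /=; lia.
Qed.

Lemma mode_e_vac (a : rootv) (n : int) : 0 <= n -> mode_e a n (vac C) = 0.
Proof. by move=> hn; rewrite vacE mode_e_ground // pairQP_weight0 add0r. Qed.

Lemma heis0 (h : hvec C) (n : int) : heis h n 0 = 0.
Proof. exact: linext0. Qed.

Lemma heis_vac (h : hvec C) (m : nat) : heis h (Posz m) (vac C) = 0.
Proof.
rewrite vacE /heis linext_basis /=; case: m => [|m].
  by rewrite big1 ?scale0r // => i _; rewrite ffunE mulr0.
by apply: big1 => i _; apply: big1 => j _; rewrite mset0E mulr0 scale0r.
Qed.

(* In :h(p)h'(q): with p + q >= 0 the right-hand factor is an h(k), k >= 0. *)
Lemma nord_vac (h h' : hvec C) (p q : int) :
  0 <= p + q -> nord h h' p q (vac C) = 0.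
Proof.
move=> hpq; rewrite /nord; case: ifP => hp /=.
  by case: p hp hpq => [m|m] hp hpq; [rewrite heis_vac heis0 | move: hp; lia].
have hq : 0 <= q by move: hp hpq; lia.
by case: q hpq hq => [m|m] _ hq; [rewrite heis_vac heis0 | move: hq; lia].
Qed.

Lemma mode_hh_vac (h h' : hvec C) (n : int) : 0 < n -> mode_hh h h' n (vac C) = 0.
Proof.
move=> hn; rewrite /mode_hh {1}vacE linext_basis /=.
by apply: big1 => k _; apply: nord_vac; lia.
Qed.

Lemma omega_mode_vac (n : int) : 0 < n -> omega_mode n (vac C) = 0.
Proof.
move=> hn; have hn0 : 0 <= n by lia.
rewrite /omega_mode /mode_pm !mode_hh_vac // !mode_e_vac //.
by rewrite !(addr0, oppr0, subr0, scaler0).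
Qed.

Lemma Lvir_vac (n : int) : 0 <= n -> Lvir n (vac C) = 0.
Proof. by move=> hn; apply: omega_mode_vac; lia. Qed.

Lemma beta_op_vac (i : 'I_4) : beta_op i (vac C) = 0.
Proof.
by case: i => [[|[|[|[|i]]]] hi] //; rewrite /beta_op /= ?mode_e_vac ?addr0.
Qed.

Lemma Proj_weight0 : Proj C weight0 = omegaF4 C 0.
Proof.
apply: functional_extensionality => i.
by rewrite /Proj /omegaF4 /= !ffunE addr0 mul0r.
Qed.

Lemma mem_msupp_vac (b : basisT) : b \in msupp (vac C) -> b = (mset0, weight0).
Proof. by rewrite vacE msupp_basis => /fset1P. Qed.

End Vacuum.

Theorem lemma6p1 (C : numClosedFieldType) :
  in_VLambda0 (vac C) /\ is_hw_vector (vac C) 0 0.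
Proof.
split.
  by move=> b /mem_msupp_vac ->; exists weight0; rewrite toP_weight0.
split.
- exact: basis_neq0.
- exact: mode_e_vac.
- exact: beta_op_vac.
- by rewrite !Lvir_vac // scale0r.
- by move=> b /mem_msupp_vac ->; exact: Proj_weight0.
Qed.
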